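(* Let $\xi>0$, $d>0$, $\delta>0$ and $n\in\mathbb{N}$ satisfy $\frac{d\xi^3-\delta}{2}n\geq1$. Let $H=(U\,\dot\cup\, V\,\dot\cup\, W,E)$ be a $3$-uniform hypergraph with $|U|=|V|=|W|=n$ such that $U,V,W$ are weakly $(\delta,d)$-quasirandom in $H$. Then at least $(1-\xi)3n$ vertices of $H$ can be covered by vertex-disjoint tight paths of length at least $\frac{d\xi^3-\delta}{2}n-2$.
   Context: For $V_1,V_2,V_3\subseteq V(H)$, $E(V_1,V_2,V_3)=\{(v_1,v_2,v_3)\in V_1\times V_2\times V_3: \{v_1,v_2,v_3\}\in E\}$ and $e(V_1,V_2,V_3)=|E(V_1,V_2,V_3)|$. The sets $V_1,V_2,V_3$ are weakly $(\delta,d)$-quasirandom in $H$ if for all $U_1\subseteq V_1,U_2\subseteq V_2,U_3\subseteq V_3$, $|e(U_1,U_2,U_3)-d|U_1||U_2||U_3||\leq\delta|V_1||V_2||V_3|$. A tight path of length $\ell$ (number of edges) is a 3-graph on distinct vertices $x_1,\dots,x_{\ell+2}$ with edges $x_ix_{i+1}x_{i+2}$, $i\in[\ell]$. *)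

From HB Require Import structures.
From mathcomp Require Import all_boot all_order all_algebra.
From mathcomp Require Import reals.
Set Implicit Arguments. Unset Strict Implicit. Unset Printing Implicit Defensive.
Import Order.TTheory GRing.Theory Num.Theory.
Local Open Scope ring_scope.

Definition uniform3 (T : finType) (E : {set {set T}}) : Prop :=
  forall e, e \in E -> #|e| = 3%N.

Definition Etrip (T : finType) (E : {set {set T}}) (V1 V2 V3 : {set T})
  : {set T * T * T} :=
  [set t : T * T * T | [&& t.1.1 \in V1, t.1.2 \in V2, t.2 \in V3 &
                          [set t.1.1; t.1.2; t.2] \in E]].

Definition etrip (T : finType) (E : {set {set T}}) (V1 V2 V3 : {set T}) : nat :=
  #|Etrip E V1 V2 V3|.

Definition weakly_quasirandom (R : realType) (T : finType) (E : {set {set T}})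
  (delta d : R) (V1 V2 V3 : {set T}) : Prop :=
  forall U1 U2 U3 : {set T}, U1 \subset V1 -> U2 \subset V2 -> U3 \subset V3 ->
    `| (etrip E U1 U2 U3)%:R - d * #|U1|%:R * #|U2|%:R * #|U3|%:R | <=
      delta * #|V1|%:R * #|V2|%:R * #|V3|%:R.

Definition tight_path (T : finType) (E : {set {set T}}) (s : seq T) : bool :=
  if s is x0 :: _ then
  [&& uniq s, (2 <= size s)%N &
      all (fun i => [set nth x0 s i; nth x0 s i.+1; nth x0 s i.+2] \in E)
          (iota 0 (size s).-2)]
  else false.

(* length = number of edges = number of vertices minus 2 *)
Definition tpath_length (T : Type) (s : seq T) : nat := (size s).-2.

(* While the uncovered parts A ⊆ U, B ⊆ V, C ⊆ W still have a
   common size m ≥ ξn, quasirandomness yields at least dm³ - δn³ ≥ 2Ln² triples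
   (u, v, w) ∈ A × B × C spanning edges, where L = (dξ³ - δ)n/2.  Repeatedly
   deleting all triples through a pair that lies in fewer than k ≈ L/3 of them
   removes a pair from one of the three pair shadows each time, hence at most
   3n²(k - 1) < 2Ln² triples, and leaves a nonempty family in which every pair
   of every triple extends in at least k ways.  There a tight path
   u₁v₁w₁u₂v₂w₂… on 3k ≥ L vertices grows backwards vertex by vertex, since at
   most k - 1 vertices of each part are used.  Remove it and repeat. *)

From HB Require Import structures.
From mathcomp Require Import all_boot all_order all_algebra.
From mathcomp Require Import reals.
From mathcomp Require Import zify ring lra.
Import Order.TTheory GRing.Theory Num.Theory.

Set Implicit Arguments.
Unset Strict Implicit.
Unset Printing Implicit Defensive.

Lemma card_setI_seq (T : finType) (A : {set T}) (s : seq T) :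
  uniq s -> #|A :&: [set x in s]| = count [in A] s.
Proof.
move=> us; rewrite -size_filter -(card_uniqP (filter_uniq _ us)).
by apply: eq_card => x; rewrite !inE mem_filter.
Qed.

Section Fibers.

Variables (X Y I : finType) (p : I -> X -> Y).
Implicit Types (F G : {set X}) (x : X) (i : I).

Definition fiber (i : I) (G : {set X}) (x : X) : {set X} :=
  [set y in G | p i y == p i x].

Definition shadow_weight (G : {set X}) : nat := \sum_i #|p i @: G|.

Definition fibers_at_least (k : nat) (G : {set X}) : Prop :=
  forall i x, x \in G -> k <= #|fiber i G x|.

Lemma fiber_sub i G x : fiber i G x \subset G.
Proof. by apply/subsetP => y; rewrite inE => /andP[]. Qed.

Lemma card_fiber_gt0 i G x : x \in G -> 0 < #|fiber i G x|.
Proof. by move=> xG; apply/card_gt0P; exists x; rewrite inE xG eqxx. Qed.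

Lemma card_remove_fiber i G x :
  #|G :\: fiber i G x| = #|G| - #|fiber i G x|.
Proof. by rewrite cardsD (setIidPr (fiber_sub i G x)). Qed.

Lemma shadow_weight_remove_fiber i G x :
  x \in G -> shadow_weight (G :\: fiber i G x) < shadow_weight G.
Proof.
move=> xG; rewrite /shadow_weight (bigD1 i) // [X in _ < X](bigD1 i) //= -addSn.
apply: leq_add; last by apply: leq_sum => j _; apply/subset_leq_card/imsetS/subsetDl.
apply/proper_card/properP; split; first exact/imsetS/subsetDl.
exists (p i x); first exact: imset_f.
apply/imsetP => -[y /[!inE] /andP[+ yG] eq_p].
by rewrite yG eq_p eqxx.
Qed.

(* Deleting a fiber with fewer than [k] points loses at most [k.-1] points and
   lowers the shadow weight by at least one, so the hypothesis survives. *)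
Lemma exists_fibers_at_least k F :
  k.-1 * shadow_weight F < #|F| ->
  exists G, [/\ G \subset F, G != set0 & fibers_at_least k G].
Proof.
have [N] := ubnP #|F|; elim: N F => // N IH F /ltnSE leFN ltF.
case: (pickP [pred ix : I * X | (ix.2 \in F) && (#|fiber ix.1 F ix.2| < k)]).
- move=> [i x] /= /andP[xF small].
  have fib0 := card_fiber_gt0 i xF.
  have fibF := subset_leq_card (fiber_sub i F x).
  have := leq_mul2l k.-1 (shadow_weight (F :\: fiber i F x)).+1 (shadow_weight F).
  rewrite shadow_weight_remove_fiber // orbT mulnS.
  set w' := k.-1 * _ => le_weight.
  have [|| G [GF' G0 thickG]] := IH (F :\: fiber i F x);
    rewrite ?card_remove_fiber -/w'; [lia | lia |].
  by exists G; split => //; apply: subset_trans GF' (subsetDl _ _).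
- move=> thickF; exists F; split.
  + by [].
  + by rewrite -card_gt0; apply: leq_ltn_trans ltF.
  + move=> i x xF; have := thickF (i, x); rewrite /= xF /=.
    by move/negbT; rewrite -leqNgt.
Qed.

Lemma fiber_avoid (Z : finType) k G i x (f : X -> Z) (s : seq Z) :
  fibers_at_least k G -> x \in G -> {in fiber i G x &, injective f} ->
  size s < k -> exists2 y, y \in fiber i G x & f y \notin s.
Proof.
move=> thickG xG injf lt_s_k.
case: (boolP [exists y in fiber i G x, f y \notin s]) => [/exists_inP | /exists_inPn fs].
  by case=> y; exists y.
have := leq_trans lt_s_k (thickG i x xG); rewrite -(card_in_imset injf) ltnNge => /negP[].
apply: leq_trans (card_size s); apply/subset_leq_card/subsetP => _ /imsetP[y yfib ->].
by have := fs y yfib; rewrite negbK.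
Qed.

End Fibers.

Fixpoint tight_edges (T : finType) (E : {set {set T}}) (s : seq T) : bool :=
  if s is x :: (y :: z :: _) as s' then ([set x; y; z] \in E) && tight_edges E s'
  else true.

Lemma tight_edgesE (T : finType) (E : {set {set T}}) (s : seq T) x0 :
  all (fun i => [set nth x0 s i; nth x0 s i.+1; nth x0 s i.+2] \in E)
      (iota 0 (size s).-2) = tight_edges E s.
Proof.
elim: s => [|x [|y [|z s]] IH] //.
have -> : tight_edges E [:: x, y, z & s] =
          ([set x; y; z] \in E) && tight_edges E [:: y, z & s] by [].
rewrite -IH [iota _ _]/= [all _ (_ :: _)]/=; congr andb.
by rewrite -(addn0 1) iotaDl all_map.
Qed.

Lemma tight_path_edges (T : finType) (E : {set {set T}}) (s : seq T) :
  uniq s -> 2 <= size s -> tight_edges E s -> tight_path E s.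
Proof. by case: s => // x s us s2 es; rewrite /tight_path us s2 tight_edgesE. Qed.

Lemma tight_path_uniq (T : finType) (E : {set {set T}}) (s : seq T) :
  tight_path E s -> uniq s.
Proof. by case: s => // x s /and3P[]. Qed.

Definition pair_shadow {T : Type} (i : 'I_3) (t : T * T * T) : T * T :=
  match nat_of_ord i with 0 => (t.1.1, t.1.2) | 1 => (t.1.1, t.2) | _ => (t.1.2, t.2) end.

Definition missing_coord {T : Type} (i : 'I_3) (t : T * T * T) : T :=
  match nat_of_ord i with 0 => t.2 | 1 => t.1.2 | _ => t.1.1 end.

Definition complete {T : Type} (i : 'I_3) (p : T * T) (z : T) : T * T * T :=
  match nat_of_ord i with 0 => (p.1, p.2, z) | 1 => (p.1, z, p.2) | _ => (z, p.1, p.2) end.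

Lemma pair_shadowK (T : Type) i (t : T * T * T) :
  complete i (pair_shadow i t) (missing_coord i t) = t.
Proof.
rewrite /complete /pair_shadow /missing_coord.
by case: t => [[a b] c]; case: i => [[|[|[|?]]] ?].
Qed.

Lemma pair_shadow_inj (T : Type) i (t t' : T * T * T) :
  pair_shadow i t = pair_shadow i t' -> missing_coord i t = missing_coord i t' -> t = t'.
Proof. by move=> sh mc; rewrite -[t](pair_shadowK i) sh mc pair_shadowK. Qed.

Section TripartiteTriples.

Variables (T : finType) (E : {set {set T}}) (A B C : {set T}).
Hypotheses (dAB : [disjoint A & B]) (dAC : [disjoint A & C]) (dBC : [disjoint B & C]).

Lemma Etrip_parts u v w :
  (u, v, w) \in Etrip E A B C -> [/\ u \in A, v \in B, w \in C & [set u; v; w] \in E].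
Proof. by rewrite inE => /and4P. Qed.

Lemma weight_Etrip_le m :
  #|A| = m -> #|B| = m -> #|C| = m ->
  shadow_weight pair_shadow (Etrip E A B C) <= 3 * (m * m).
Proof.
move=> cA cB cC; apply: (@leq_trans (\sum_(i < 3) m * m)); last first.
  by rewrite sum_nat_const card_ord.
apply: leq_sum => i _.
suff [P [Q [shP cP cQ]]] : exists P Q : {set T},
    [/\ pair_shadow i @: Etrip E A B C \subset setX P Q, m = #|P| & m = #|Q|].
  by rewrite {1}cP cQ -cardsX; apply: subset_leq_card.
case: i => [[|[|[|?]]] ?] //; [exists A, B | exists A, C | exists B, C]; split => //;
  apply/subsetP => _ /imsetP[[[u v] w] /Etrip_parts[uA vB wC _] ->];
  by rewrite inE /= ?uA ?vB ?wC.
Qed.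

Lemma triple_avoid (G : {set T * T * T}) k i t (s : seq T) :
  fibers_at_least pair_shadow k G -> t \in G -> size s < k ->
  exists2 z, complete i (pair_shadow i t) z \in G & z \notin s.
Proof.
move=> thickG tG lt_s_k.
have [|t' /[!inE] /andP[t'G /eqP <-] t'Ns] :=
  fiber_avoid (i := i) (f := missing_coord i) thickG tG _ lt_s_k.
  move=> y y' /[!inE] /andP[_ /eqP sh_y] /andP[_ /eqP sh_y'].
  by apply: pair_shadow_inj; rewrite sh_y sh_y'.
by exists (missing_coord i t'); rewrite ?pair_shadowK.
Qed.

Definition balanced (j : nat) (s : seq T) : Prop :=
  [/\ count [in A] s = j, count [in B] s = j, count [in C] s = j
    & {subset s <= A :|: B :|: C}].

Definition starts_in (G : {set T * T * T}) (s : seq T) : bool :=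
  if s is [:: u, v, w & _] then (u, v, w) \in G else false.

Lemma balanced_cons3 j s u v w :
  balanced j s -> u \in A -> v \in B -> w \in C -> balanced j.+1 [:: u, v, w & s].
Proof.
move=> [cA cB cC sub] uA vB wC; split.
- by rewrite /= cA uA (disjointFl dAB vB) (disjointFl dAC wC).
- by rewrite /= cB vB (disjointFr dAB uA) (disjointFl dBC wC).
- by rewrite /= cC wC (disjointFr dAC uA) (disjointFr dBC vB).
- move=> x; rewrite inE.
  case/or4P => [/eqP-> | /eqP-> | /eqP-> | /sub //]; by rewrite !inE ?uA ?vB ?wC ?orbT.
Qed.

Lemma uniq_cons3 s u v w :
  u \in A -> v \in B -> w \in C -> u \notin s -> v \notin s -> w \notin s ->
  uniq s -> uniq [:: u, v, w & s].
Proof.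
move=> uA vB wC uNs vNs wNs us; rewrite /= !inE !negb_or uNs vNs wNs us !andbT.
have neq (P Q : {set T}) x y : [disjoint P & Q] -> x \in P -> y \in Q -> x != y.
  by move=> dPQ xP yQ; apply: contraTneq xP => ->; rewrite (disjointFl dPQ yQ).
by rewrite (neq _ _ _ _ dAB uA vB) (neq _ _ _ _ dAC uA wC) (neq _ _ _ _ dBC vB wC).
Qed.

Variables (G : {set T * T * T}) (k : nat).
Hypotheses (GE : G \subset Etrip E A B C) (thickG : fibers_at_least pair_shadow k G).

(* Prepend [u0 v0 w0] to [u v w ...]: complete [(u, v)] by [w0], then [(u, w0)]
   by [v0], then [(v0, w0)] by [u0], each time avoiding the part's vertices in
   [s]; the new edges are [u0 v0 w0], [v0 w0 u] and [w0 u v]. *)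
Lemma tight_path_extend j s :
  j < k -> uniq s -> tight_edges E s -> balanced j s -> starts_in G s ->
  exists s', [/\ size s' = (size s).+3, uniq s', tight_edges E s',
                 balanced j.+1 s' & starts_in G s'].
Proof.
case: s => [|u [|v [|w r]]] // ltjk us es bs uvwG.
set s := [:: u, v, w & r] in us es bs *; have [cA cB cC _] := bs.
have avoid i t (P : {set T}) : t \in G -> count [in P] s = j ->
    exists2 z, complete i (pair_shadow i t) z \in G & z \notin filter [in P] s.
  by move=> tG cP; apply: triple_avoid thickG tG _; rewrite size_filter cP.
have [w0 t1G w0N] := avoid 0%R _ C uvwG cC.
rewrite /complete /pair_shadow /= in t1G.
have [v0 t2G v0N] := avoid 1%R _ B t1G cB.
rewrite /complete /pair_shadow /= in t2G.
have [u0 t3G u0N] := avoid 2%R _ A t2G cA.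
rewrite /complete /pair_shadow /= in t3G.
have [u0A v0B w0C e0] := Etrip_parts (subsetP GE _ t3G).
have [_ _ _ e1] := Etrip_parts (subsetP GE _ t2G).
have [_ _ _ e2] := Etrip_parts (subsetP GE _ t1G).
rewrite !mem_filter ?u0A ?v0B ?w0C /= in u0N v0N w0N.
have rot (x y z : T) : [set x; y; z] = [set y; z; x].
  by apply/setP => a; rewrite !inE; case: (a == x); case: (a == y); case: (a == z).
exists [:: u0, v0, w0 & s]; split => //.
- exact: uniq_cons3.
- by rewrite /= e0 -rot e1 -rot -rot e2.
- exact: balanced_cons3.
Qed.

Lemma long_tight_path j :
  G != set0 -> j < k ->
  exists s, [/\ size s = 3 * j.+1, uniq s, tight_edges E s,
                balanced j.+1 s & starts_in G s].
Proof.
case/set0Pn => -[[u v] w] uvwG; elim: j => [|j IH] ltjk.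
  have [uA vB wC e] := Etrip_parts (subsetP GE _ uvwG).
  exists [:: u; v; w]; split => //.
  - by apply: uniq_cons3.
  - by rewrite /= e.
  - by apply: balanced_cons3 => //; split.
have [s [sz us es bs ss]] := IH (ltnW ltjk).
have [s' [sz' us' es' bs' ss']] := tight_path_extend ltjk us es bs ss.
by exists s'; split => //; rewrite sz' sz; lia.
Qed.

End TripartiteTriples.

Local Open Scope ring_scope.

Section GreedyCover.

Variables (R : realType) (T : finType) (E : {set {set T}}) (U V W : {set T}) (L M : R).

Hypothesis path_in_large_parts : forall m (A B C : {set T}),
  A \subset U -> B \subset V -> C \subset W -> #|A| = m -> #|B| = m -> #|C| = m ->
  M <= m%:R ->
  exists j s, [/\ (0 < j)%N, size s = (3 * j)%N, tight_path E s, L <= (size s)%:R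
                & balanced A B C j s].

Lemma greedy_tight_path_cover m (A B C : {set T}) :
  A \subset U -> B \subset V -> C \subset W -> #|A| = m -> #|B| = m -> #|C| = m ->
  exists P : seq (seq T),
    [/\ uniq (flatten P), forall p, p \in P -> tight_path E p /\ L <= (size p)%:R,
        {subset flatten P <= A :|: B :|: C}
      & 3 * m%:R - 3 * M <= (size (flatten P))%:R].
Proof.
elim/ltn_ind: m A B C => m IH A B C sA sB sC cA cB cC.
have [ltmM | leMm] := ltrP m%:R M.
  by exists [::]; split => //=; lra.
have [j [s [j0 sz ts Ls [cAs cBs cCs subs]]]] := path_in_large_parts sA sB sC cA cB cC leMm.
have us := tight_path_uniq ts.
pose S := [set x in s].
have cardD (P : {set T}) : #|P| = m -> count [in P] s = j -> #|P :\: S| = (m - j)%N.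
  by move=> <- <-; rewrite cardsD card_setI_seq.
have subD (P Q : {set T}) : P \subset Q -> P :\: S \subset Q.
  exact: subset_trans (subsetDl _ _).
have lejm : (j <= m)%N by rewrite -cAs -cA -card_setI_seq // subset_leq_card ?subsetIl.
have [|P [uP tP subP sizeP]] := IH (m - j)%N _ (A :\: S) (B :\: S) (C :\: S)
  (subD _ _ sA) (subD _ _ sB) (subD _ _ sC) (cardD _ cA cAs) (cardD _ cB cBs) (cardD _ cC cCs).
  lia.
exists (s :: P); split.
- rewrite /= cat_uniq us uP andbT; apply/hasPn => x /subP.
  by rewrite !inE -!andb_orr => /andP[].
- by move=> p /predU1P[-> | /tP].
- move=> x; rewrite mem_cat => /orP[/subs // | /subP].
  by rewrite !inE => /orP[/orP[] | ] /andP[_ ->]; rewrite ?orbT.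
- rewrite /= size_cat natrD sz natrM; move: sizeP; rewrite natrB //; lra.
Qed.

End GreedyCover.

Lemma weakly_quasirandom_etrip_ge (R : realType) (T : finType) (E : {set {set T}})
    (delta d : R) (U V W A B C : {set T}) :
  weakly_quasirandom E delta d U V W -> A \subset U -> B \subset V -> C \subset W ->
  d * #|A|%:R * #|B|%:R * #|C|%:R - delta * #|U|%:R * #|V|%:R * #|W|%:R
    <= (etrip E A B C)%:R.
Proof.
by move=> qr sA sB sC; have := qr _ _ _ sA sB sC; rewrite ler_norml => /andP[+ _]; lra.
Qed.

Section QuasirandomTriples.

Variables (R : realType) (xi d delta : R) (n : nat) (T : finType) (E : {set {set T}})
  (U V W : {set T}).
Hypotheses (xi_gt0 : 0 < xi) (d_gt0 : 0 < d) (L_ge1 : 1 <= (d * xi ^+ 3 - delta) / 2 * n%:R).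
Hypotheses (dUV : [disjoint U & V]) (dUW : [disjoint U & W]) (dVW : [disjoint V & W]).
Hypotheses (cU : #|U| = n) (cV : #|V| = n) (cW : #|W| = n).
Hypothesis qr : weakly_quasirandom E delta d U V W.

Local Notation L := ((d * xi ^+ 3 - delta) / 2 * n%:R).

Lemma card_Etrip_ge m (A B C : {set T}) :
  A \subset U -> B \subset V -> C \subset W -> #|A| = m -> #|B| = m -> #|C| = m ->
  xi * n%:R <= m%:R -> 2 * L * n%:R ^+ 2 <= #|Etrip E A B C|%:R.
Proof.
move=> sA sB sC cA cB cC le_m.
have := weakly_quasirandom_etrip_ge qr sA sB sC; rewrite cA cB cC cU cV cW.
have : d * (xi * n%:R) ^+ 3 <= d * m%:R ^+ 3.
  by rewrite ler_pM2l // lerXn2r // nnegrE // mulr_ge0 // ltW.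
rewrite /etrip; lra.
Qed.

Lemma balanced_path_in_large_parts m (A B C : {set T}) :
  A \subset U -> B \subset V -> C \subset W -> #|A| = m -> #|B| = m -> #|C| = m ->
  xi * n%:R <= m%:R ->
  exists j s, [/\ (0 < j)%N, size s = (3 * j)%N, tight_path E s, L <= (size s)%:R
                & balanced A B C j s].
Proof.
move=> sA sB sC cA cB cC le_m.
have n_gt0 : 0 < n%:R :> R.
  by rewrite ltr0n lt0n; apply: contraTneq L_ge1 => ->; rewrite mulr0 ler10.
have many := card_Etrip_ge sA sB sC cA cB cC le_m.
have l_ge1 := L_ge1; set l := L in l_ge1 many *.
set t := Num.truncn (l / 3).
have le_t : t%:R <= l / 3 by rewrite truncn_le; lra.
have lt_l : l < (3 * t.+1)%:R by rewrite natrM; have := truncnS_gt (l / 3); lra.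
set F := Etrip E A B C.
have le_weight : (shadow_weight pair_shadow F)%:R <= 3 * n%:R ^+ 2 :> R.
  have le_mn : (m <= n)%N by rewrite -cA -cU subset_leq_card.
  rewrite expr2 -!natrM ler_nat (leq_trans (weight_Etrip_le E cA cB cC)) //.
  by rewrite leq_mul2l leq_mul.
have thin : (t * shadow_weight pair_shadow F < #|F|)%N.
  rewrite -(ltr_nat R) natrM.
  apply: le_lt_trans (ler_pM _ _ le_t le_weight) _ => //.
  have : 0 < l * n%:R ^+ 2 by rewrite mulr_gt0 ?exprn_gt0 //; lra.
  lra.
have [G [GF G0 thickG]] := exists_fibers_at_least (k := t.+1) thin.
have [s [sz us es bs _]] := long_tight_path (disjointW sA sB dUV) (disjointW sA sC dUW)
  (disjointW sB sC dVW) GF thickG G0 (ltnSn t).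
exists t.+1, s; split => //; first by apply: tight_path_edges => //; rewrite sz mulnS.
by rewrite sz ltW.
Qed.

End QuasirandomTriples.

Lemma natr_pred2_ge (R : realType) (k : nat) : k%:R - 2 <= k.-2%:R :> R.
Proof. by case: k => [|[|k]]; rewrite ?natrS /=; lra. Qed.

Theorem lemma6p2 (R : realType) (xi d delta : R) (n : nat)
  (T : finType) (E : {set {set T}}) (U V W : {set T}) :
  0 < xi -> 0 < d -> 0 < delta ->
  1 <= (d * xi ^+ 3 - delta) / 2 * n%:R ->
  uniform3 E ->
  [set: T] = U :|: V :|: W ->
  [disjoint U & V] -> [disjoint U & W] -> [disjoint V & W] ->
  #|U| = n -> #|V| = n -> #|W| = n ->
  weakly_quasirandom E delta d U V W ->
  exists P : seq (seq T),
    [/\ uniq (flatten P),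
        (forall p, p \in P -> tight_path E p /\
           (d * xi ^+ 3 - delta) / 2 * n%:R - 2 <= (tpath_length p)%:R) &
        (1 - xi) * (3 * n%:R) <= (size (flatten P))%:R].
Proof.
move=> xi_gt0 d_gt0 _ L_ge1 _ _ dUV dUW dVW cU cV cW qr.
have [P [uP tP _ sizeP]] := greedy_tight_path_cover
  (balanced_path_in_large_parts xi_gt0 d_gt0 L_ge1 dUV dUW dVW cU cV cW qr)
  (subxx U) (subxx V) (subxx W) cU cV cW.
exists P; split => //.
  move=> p /tP[tp Lp]; split => //.
  by apply: le_trans (natr_pred2_ge _ (size p)); lra.
by move: sizeP; rewrite mulrBl mul1r mulrCA; lra.
Qed.
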